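(* Let $p\geq 80$ be a prime, let $0<\alpha\leq \frac15$ be real, let $d\in[2,p-2]$ be an integer, and let $N$ be a positive integer. Let $I$ and $J$ be arithmetic progressions in $\mathbb{Z}/p\mathbb{Z}$ having the same common difference and satisfying $|I|=2N-1$, $|J|>(1+\alpha)N-3$, and $|I\cap (d\cdot J)|\leq \alpha N-2$. Then $N<\frac{p+3}{3+\alpha}$.
   Context: An arithmetic progression in $\mathbb{Z}/p\mathbb{Z}$ with difference $g\neq 0$ is a set of the form $\{a, a+g,\dots,a+(k-1)g\}$ with $1\le k\le p$. For $X\subseteq\mathbb{Z}/p\mathbb{Z}$ and an integer $d$, the dilate is $d\cdot X=\{dx: x\in X\}$. *)

From HB Require Import structures.
From mathcomp Require Import all_boot all_order all_algebra.
Set Implicit Arguments. Unset Strict Implicit. Unset Printing Implicit Defensive.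
Import Order.TTheory GRing.Theory Num.Theory.
Local Open Scope ring_scope.

Definition is_AP (p : nat) (X : {set 'F_p}) (g : 'F_p) : Prop :=
  g != 0 /\
  exists (a : 'F_p) (k : nat), (1 <= k <= p)%N /\
    X = [set a + (val i)%:R * g | i : 'I_k].

Definition dilate (p : nat) (d : nat) (X : {set 'F_p}) : {set 'F_p} :=
  [set d%:R * x | x in X].

From HB Require Import structures.
From mathcomp Require Import all_boot all_order all_algebra.
From mathcomp Require Import zify ring lra.
Set Implicit Arguments.
Unset Strict Implicit.
Unset Printing Implicit Defensive.

Import Order.TTheory GRing.Theory Num.Theory.

(* In the coordinate x |-> (x - a) / g, where I = {a + i g : i < s}, the set I
   becomes the interval [0, s) of Z/pZ, and d.J (read backwards when d > s)
   becomes a walk c0, c0 + t, c0 + 2t, ... (mod p) with step t = d or p - d,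
   so 2 <= t <= s.  If N >= (p + 3) / (3 + alpha) then p <= 2s, so the gap
   [s, p) is no longer than [0, s).  Unrolling the walk in Z and cutting it
   into laps of length p, each lap but the first puts at most twice as many
   points in the gap as in [0, s), and the first lap puts at most
   ceil((p - s) / t) <= (p - s + 1) / 2 there.  Hence |J| <= 3 M + (p - s + 1) / 2
   with M = |I :&: d.J|, contradicting the assumed bounds on |J| and M. *)

Lemma count_iota_range a b L :
  count (fun j => a <= j < b) (iota 0 L) = minn b L - a.
Proof.
elim: L => [|L IHL]; first by rewrite /= minn0.
rewrite -addn1 iotaD count_cat IHL /= add0n addn0.
case: (leqP a L) => aL; case: (ltnP L b) => Lb /=; lia.
Qed.

Lemma count_sum_fibers (T : eqType) (a : pred T) (f : T -> nat) K s :
  {in s, forall x, f x < K} ->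
  count a s = \sum_(Q < K) count (fun x => a x && (f x == Q)) s.
Proof.
elim: s => [|x s IHs] fK /=; first by rewrite big1.
rewrite big_split /= -IHs; last by move=> y ys; apply: fK; rewrite inE ys orbT.
have fxK : f x < K by apply: fK; rewrite inE eqxx.
rewrite (bigD1 (Ordinal fxK)) //= eqxx andbT big1 ?addn0 // => Q /negbTE.
by rewrite -val_eqE /= eq_sym => ->; rewrite andbF.
Qed.

Lemma divn_modn_rangeE p Q lo hi v : 0 < p -> hi <= p ->
  (v %/ p == Q) && (lo <= v %% p < hi) = (Q * p + lo <= v < Q * p + hi).
Proof.
move=> p_gt0 hip; rewrite [in RHS](divn_eq v p).
case: eqP => [<-|neQ]; first by rewrite leq_add2l ltn_add2l.
apply/esym/negP => /andP[loQ Qhi]; apply: neQ; apply/eqP.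
rewrite eqn_leq -ltnS ltn_divLR // leq_divRL //; apply/andP; split; lia.
Qed.

Lemma double_ceil_div_le m t : 1 < t -> 2 * ((m + t - 1) %/ t) <= m + 1.
Proof.
move=> t_gt1; have := leq_divM (m + t - 1) t.
case: ((m + t - 1) %/ t) => [|u] ut; first by [].
have : u.+1 * 2 <= u.+1 * t by rewrite leq_mul2l t_gt1 orbT.
nia.
Qed.

Section WindowCounts.
Variables (c0 t : nat).
Hypothesis t_gt0 : 0 < t.

Local Notation walk j := (c0 + j * t).

Definition nbelow X := (X - c0 + t - 1) %/ t.

Lemma leq_nbelow X j : (X <= walk j) = (nbelow X <= j).
Proof.
have := ltn_divLR (X - c0 + t - 1) j.+1 t_gt0.
rewrite ltnS mulSn => ->; apply/idP/idP; lia.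
Qed.

Lemma nbelow_bounds X : X - c0 <= nbelow X * t <= X - c0 + t - 1.
Proof.
have := leq_divM (X - c0 + t - 1) t.
have := ltn_ceil (X - c0 + t - 1) t_gt0.
rewrite /nbelow; lia.
Qed.

Lemma count_window X Y L :
  count (fun j => X <= walk j < Y) (iota 0 L) = minn (nbelow Y) L - nbelow X.
Proof.
rewrite -count_iota_range; apply: eq_count => j /=.
by rewrite !leq_nbelow ltnNge leq_nbelow -ltnNge.
Qed.

Lemma count_window_le X Y L :
  count (fun j => X <= walk j < Y) (iota 0 L) <= (Y - X + t - 1) %/ t.
Proof.
rewrite count_window leq_divRL //.
have := nbelow_bounds X; have := nbelow_bounds Y.
set a := nbelow X; set b := nbelow Y; clearbody a b => hb ha.
have : (minn b L - a) * t <= (b - a) * t by rewrite leq_mul2r leq_sub2r ?geq_minl ?orbT.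
rewrite mulnBl; lia.
Qed.

(* The walk starts at or before [X], so [[X, Z)] contains at least
   [(Z - X) %/ t >= 1] of its points, while the next window, being no longer,
   contains at most [(Z - X) %/ t + 1]. *)
Lemma count_window_next_le X Z Y L : c0 <= X -> t <= Z - X -> Y - Z <= Z - X ->
  count (fun j => Z <= walk j < Y) (iota 0 L) <=
  2 * count (fun j => X <= walk j < Z) (iota 0 L).
Proof.
move=> c0X tZX YZ; rewrite !count_window.
have := nbelow_bounds X; have := nbelow_bounds Z; have := nbelow_bounds Y.
set a := nbelow X; set b := nbelow Z; set c := nbelow Y; clearbody a b c.
move=> hc hb ha.
have ab : a < b by rewrite -(ltn_pmul2r t_gt0); lia.
have t_le : t <= b * t - a * t by rewrite -mulnBl leq_pmull // subn_gt0.
have cb : c - b <= 2 * (b - a).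
  rewrite leqNgt; apply/negP => cb.
  have : (2 * (b - a)).+1 * t <= (c - b) * t by rewrite leq_mul2r cb orbT.
  rewrite mulSn !mulnBl -mulnA mulnBl; lia.
have [_|Lb] := leqP b L; first by rewrite (leq_trans _ cb) ?leq_sub2r ?geq_minl.
suff -> : minn c L - b = 0 by [].
by apply/eqP; rewrite subn_eq0 (leq_trans (geq_minr c L)) // ltnW.
Qed.

End WindowCounts.

Lemma count_residue_gap_le p s t c0 L :
  0 < t -> t <= s -> s <= p -> p <= 2 * s -> c0 < p ->
  count (fun j => s <= (c0 + j * t) %% p) (iota 0 L) <=
  2 * count (fun j => (c0 + j * t) %% p < s) (iota 0 L) + (p - s + t - 1) %/ t.
Proof.
move=> t_gt0 ts sp ps c0p.
have p_gt0 : 0 < p by lia.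
pose K := c0 + L * t.
have quotK : {in iota 0 L, forall j, (c0 + j * t) %/ p < K.+1}.
  move=> j; rewrite mem_iota add0n => /andP[_ jL]; rewrite ltnS.
  apply: leq_trans (leq_div _ _) _; rewrite leq_add2l leq_mul2r ltnW ?orbT //.
pose lap lo hi Q := count (fun j => Q * p + lo <= c0 + j * t < Q * p + hi) (iota 0 L).
have by_laps lo hi : hi <= p ->
    count (fun j => lo <= (c0 + j * t) %% p < hi) (iota 0 L) = \sum_(0 <= Q < K.+1) lap lo hi Q.
  move=> hip; rewrite (count_sum_fibers _ quotK) big_mkord; apply: eq_bigr => Q _.
  by apply: eq_count => j; rewrite andbC divn_modn_rangeE.
have first_lap : lap s p 0 <= (p - s + t - 1) %/ t.
  by have := count_window_le c0 t_gt0 s p L; rewrite /lap mul0n !add0n.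
have next_lap Q : lap s p Q.+1 <= 2 * lap 0 s Q.+1.
  apply: count_window_next_le => //; last by lia.
  - by rewrite addn0; apply: leq_trans (ltnW c0p) _; rewrite leq_pmull.
  - lia.
have -> : count (fun j => s <= (c0 + j * t) %% p) (iota 0 L) =
          count (fun j => s <= (c0 + j * t) %% p < p) (iota 0 L).
  by apply: eq_count => j; rewrite ltn_pmod ?andbT.
rewrite (by_laps s p) // (eq_count (a2 := fun j => 0 <= (c0 + j * t) %% p < s)) //.
rewrite (by_laps 0 s) // !big_nat_recl //.
have : \sum_(0 <= Q < K) lap s p Q.+1 <= 2 * \sum_(0 <= Q < K) lap 0 s Q.+1.
  by rewrite big_distrr; apply: leq_sum => Q _; exact: next_lap.
lia.
Qed.

Lemma card_ord_pred L (P : pred nat) : #|[set j : 'I_L | P j]| = count P (iota 0 L).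
Proof.
rewrite cardsE cardE /enum_mem size_filter -enumT -val_enum_ord count_map.
exact: eq_count.
Qed.

Lemma card_setI_imset (T : finType) (A : {set T}) L (f : 'I_L -> T) : injective f ->
  #|A :&: [set f j | j : 'I_L]| = #|[set j : 'I_L | f j \in A]|.
Proof.
move=> f_inj; rewrite -(card_imset _ f_inj); apply: eq_card => x.
rewrite !inE; apply/andP/imsetP.
  by move=> [xA /imsetP[j _ xj]]; exists j; rewrite ?inE -?xj.
by move=> [j]; rewrite inE => jA ->; split => //; apply: imset_f.
Qed.

Local Open Scope ring_scope.

Definition AP p (a g : 'F_p) k : {set 'F_p} := [set a + (val i)%:R * g | i : 'I_k].

Lemma AP_rev p (a g : 'F_p) L : (0 < L)%N ->
  AP a g L = AP (a + (L - 1)%:R * g) (-1 * g) L.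
Proof.
move=> L_gt0; apply/setP => x; apply/imsetP/imsetP => -[i _ ->];
  exists (rev_ord i) => //=; rewrite natrB ?ltn_ord // natrB // mulrSr; ring.
Qed.

Section PrimeField.
Variable p : nat.
Hypothesis p_pr : prime p.

Lemma ltn_val_Fp (x : 'F_p) : (val x < p)%N.
Proof. by rewrite -[X in (_ < X)%N](Fp_cast p_pr) ltn_ord. Qed.

Lemma val_natFp n : (n < p)%N -> (n%:R : 'F_p) = n :> nat.
Proof. by move=> np; rewrite val_Fp_nat // modn_small. Qed.

Lemma natFp_val (x : 'F_p) : (x : nat)%:R = x.
Proof. by apply: val_inj => /=; rewrite val_natFp ?ltn_val_Fp. Qed.

Lemma natFp_inj m n : (m < p)%N -> (n < p)%N -> (m%:R : 'F_p) = n%:R -> m = n.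
Proof. by move=> mp np /(congr1 val) /=; rewrite !val_natFp. Qed.

Lemma mem_AP (a g x : 'F_p) k : g != 0 -> (k <= p)%N ->
  (x \in AP a g k) = (((x - a) / g : nat) < k)%N.
Proof.
move=> g0 kp; apply/imsetP/idP => [[i _ ->]|xk].
  by rewrite addrC addKr mulfK //= val_natFp // (leq_trans (ltn_ord i)).
by exists (Ordinal xk) => //; rewrite natFp_val mulfVK // addrC subrK.
Qed.

Lemma AP_inj (a g : 'F_p) k : g != 0 -> (k <= p)%N ->
  injective (fun i : 'I_k => a + (val i)%:R * g).
Proof.
move=> g0 kp i j /= /addrI /(mulIf g0) /natFp_inj eq_ij; apply: val_inj.
by apply: eq_ij; apply: leq_trans kp.
Qed.

Lemma card_AP (a g : 'F_p) k : g != 0 -> (k <= p)%N -> #|AP a g k| = k.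
Proof. by move=> g0 kp; rewrite card_imset ?card_ord //; apply: AP_inj. Qed.

(* In the coordinate [x |-> (x - a) / g] the progression [AP a g s] becomes
   [{0, ..., s - 1}], and [d . AP b (r g) L] becomes the walk [c0 + j t (mod p)]. *)
Lemma card_AP_setI_dilate (a b g r : 'F_p) d t s L :
  g != 0 -> r != 0 -> d%:R != 0 :> 'F_p -> (s <= p)%N -> (L <= p)%N ->
  d%:R * r = t%:R ->
  #|AP a g s :&: dilate d (AP b (r * g) L)| =
  count (fun j => ((d%:R * b - a) / g + j * t) %% p < s)%N (iota 0 L).
Proof.
move=> g0 r0 d0 sp Lp drt.
rewrite /dilate -imset_comp card_setI_imset; last first.
  by move=> i j /(mulfI d0); apply: AP_inj => //; rewrite mulf_neq0.
rewrite -card_ord_pred; apply: eq_card => j; rewrite !inE /= mem_AP //.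
have -> : (d%:R * (b + (val j)%:R * (r * g)) - a) / g =
    (d%:R * b - a) / g + (val j * t)%:R by rewrite natrM -drt; field.
by rewrite -[X in X + _]natFp_val -natrD val_Fp_nat.
Qed.

Lemma card_AP_setI_dilate_walk (a b g : 'F_p) d s L :
  g != 0 -> (s <= p)%N -> (p <= 2 * s)%N -> (L <= p)%N -> (0 < L)%N -> (2 <= d <= p - 2)%N ->
  exists t c0, [/\ (2 <= t <= s)%N, (c0 < p)%N &
    #|AP a g s :&: dilate d (AP b g L)| = count (fun j => (c0 + j * t) %% p < s)%N (iota 0 L)].
Proof.
move=> g0 sp ps Lp L_gt0 /andP[d2 dp].
have d0 : d%:R != 0 :> 'F_p.
  by apply/eqP => /(congr1 val) /=; rewrite val_natFp //; lia.
have [ds|sd] := leqP d s.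
  exists d, ((d%:R * b - a) / g : nat); split; rewrite ?d2 ?ltn_val_Fp //.
  by rewrite -[g in AP b g]mul1r (card_AP_setI_dilate (t := d) _ _ g0) ?oner_neq0 ?mulr1.
exists (p - d)%N, ((d%:R * (b + (L - 1)%:R * g) - a) / g : nat).
split; rewrite ?ltn_val_Fp //; first lia.
rewrite [AP b g L]AP_rev // (card_AP_setI_dilate (t := p - d) _ _ g0) ?oppr_eq0 ?oner_neq0 //.
by rewrite natrB ?(pchar_Fp_0 p_pr) ?mulrN1 ?sub0r //; lia.
Qed.

Lemma AP_setI_dilate_lower_bound (I J : {set 'F_p}) g d :
  is_AP I g -> is_AP J g -> (p <= 2 * #|I|)%N -> (2 <= d <= p - 2)%N ->
  (2 * #|J| + #|I| <= 6 * #|I :&: dilate d J| + p + 1)%N.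
Proof.
move=> [g0 [a [s [/andP[s_gt0 sp] ->]]]] [_ [b [L [/andP[L_gt0 Lp] ->]]]] ps drange.
rewrite !card_AP // in ps *.
have [t [c0 [/andP[t2 ts] c0p ->]]] :=
  card_AP_setI_dilate_walk a b g0 sp ps Lp L_gt0 drange.
have := count_residue_gap_le L (ltnW t2) ts sp ps c0p.
have := count_predC (fun j => (c0 + j * t) %% p < s)%N (iota 0 L).
rewrite size_iota (@eq_count _ (predC _) (fun j => s <= (c0 + j * t) %% p)%N); last first.
  by move=> j /=; rewrite -leqNgt.
have := double_ceil_div_le (p - s) t2.
lia.
Qed.

End PrimeField.

Theorem lemma3p3 (R : realFieldType) (p : nat) (alpha : R) (d N : nat)
  (I J : {set 'F_p}) (g : 'F_p) :
  prime p -> (80 <= p)%N ->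
  0 < alpha -> alpha <= 5^-1 ->
  (2 <= d <= p - 2)%N ->
  (0 < N)%N ->
  is_AP I g -> is_AP J g ->
  #|I| = (2 * N - 1)%N ->
  (#|J|%:R : R) > (1 + alpha) * N%:R - 3 ->
  (#|I :&: dilate d J|%:R : R) <= alpha * N%:R - 2 ->
  (N%:R : R) < (p%:R + 3) / (3 + alpha).
Proof.
move=> p_pr _ alpha_gt0 alpha_le drange N_gt0 API APJ cardI cardJ cardIdJ.
rewrite ltNge; apply/negP; rewrite ler_pdivrMr; last by lra.
move=> large_N.
have alphaN : alpha * N%:R <= 5^-1 * N%:R by rewrite ler_wpM2r.
have N_ge0 : 0 <= N%:R :> R by [].
have pI : (p <= 2 * #|I|)%N.
  by rewrite cardI -(ler_nat R) natrM natrB ?natrM; [lra | lia].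
have := AP_setI_dilate_lower_bound p_pr API APJ pI drange.
rewrite cardI -(ler_nat R) !natrD natrB; last by lia.
rewrite !natrM.
move: (#|J|%:R : R) (#|I :&: dilate d J|%:R : R) cardJ cardIdJ => nJ nIdJ.
lra.
Qed.
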